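(* Let $k$ be an algebraically closed field and let $R = k\{\widehat{X}_1,\dots,\widehat{X}_s\}/\langle \widehat f_1,\widehat f_2,\dots\rangle$ be a finitely generated $k$-algebra satisfying a polynomial identity, with $M$, $\pi$, $T$, $\Psi$ as in the context. Then $\Psi:\operatorname{Prim} R\to\operatorname{Max} T$ is open and closed onto its image. More precisely, for every ideal $I$ of $R$, setting $J = (M\pi(I)M)\cap T$, $$\Psi(V_R(I)) = \operatorname{Image}\Psi\cap V_T(J),\qquad \Psi(W_R(I)) = \operatorname{Image}\Psi\cap W_T(J),$$ where $W_R(I)$ and $W_T(J)$ denote the complements of $V_R(I)$ in $\operatorname{Prim} R$ and of $V_T(J)$ in $\operatorname{Max} T$.
   Context: All algebra homomorphisms are unital. $X_\ell$ denotes the image of $\widehat X_\ell$ in $R$. Let $d$ be a positive integer such that every irreducible representation of $R$ has $k$-dimension at most $d$, and let $N$ be a common multiple of $1,2,\dots,d$. Let $\widehat C = k[\widehat x^{(\ell)}_{ij} : 1\le i,j\le N,\ 1\le \ell\le s]$ and let $\widehat\pi$ be the $k$-algebra homomorphism from the free algebra to $M_N(\widehat C)$ sending $\widehat X_\ell$ to the generic matrix $(\widehat x^{(\ell)}_{ij})$. Let $\operatorname{Rel}$ be the ideal of $\widehat C$ generated by all entries of all $\widehat\pi(\widehat f_i)$; set $C=\widehat C/\operatorname{Rel}$, $M=M_N(C)$ (with $C$ identified with the scalar matrices), $x^{(\ell)}_{ij}$ the image of $\widehat x^{(\ell)}_{ij}$, and $\pi:R\to M$ the induced homomorphism $X_\ell\mapsto(x^{(\ell)}_{ij})$.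 Let $T\subseteq C$ be the $k$-subalgebra generated by the coefficients of the characteristic polynomials of the elements of $\pi(R)$. For a representation $\rho:R\to M_N(k)$ let $\widetilde\rho:M\to M_N(k)$ be the unique $k$-algebra homomorphism that is the identity on $M_N(k)\subseteq M$ with $\widetilde\rho\circ\pi=\rho$. For a representation $\rho:R\to M_m(k)$ with $m\mid N$, let $\rho_N(r)=\operatorname{diag}(\rho(r),\dots,\rho(r))$ ($N/m$ blocks). For a primitive ideal $P$ of $R$ choose an irreducible representation $\rho:R\to M_m(k)$ with kernel $P$ and set $\Psi(P)=\ker(\widetilde{\rho_N}|_T)\in\operatorname{Max}T$; this depends only on $P$ and gives an injection $\Psi:\operatorname{Prim}R\to\operatorname{Max}T$. $\operatorname{Prim}R$ (primitive ideals) and $\operatorname{Max}T$ (maximal ideals) carry the Jacobson/Zariski topologies: closed sets $V_R(I)=\{P: P\supseteq I\}$ and $V_T(J)=\{\mathfrak m:\mathfrak m\supseteq J\}$. *)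

From HB Require Import structures.
From Stdlib Require Import ClassicalEpsilon.
From mathcomp Require Import all_boot all_order all_algebra.
From mathcomp Require Import ring_quotient generic_quotient.
From mathcomp Require Import finmap monalg.

Set Implicit Arguments.
Unset Strict Implicit.
Unset Printing Implicit Defensive.

Import GRing.Theory.
Local Open Scope ring_scope.
Local Open Scope quotient_scope.

(* The free (noncommutative) k-algebra k{X_1,...,X_s}: the monoid       *)
(* algebra of the free monoid on 'I_s.                                  *)
Definition FA (k : fieldType) (s : nat) := {malg k[{fmonom 'I_s}]}.

Definition ncX (k : fieldType) (s : nat) (l : 'I_s) : FA k s := << fmu l >>.

Definition nceval (k : fieldType) (s : nat) (A : pzRingType) (phi : k -> A)
    (a : 'I_s -> A) (p : FA k s) : A :=
  \sum_(w <- msupp p) phi p@_w * \prod_(i <- (w : seq 'I_s)) a i.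

Section RSide.
Variables (k : fieldType) (R : algType k).

Definition alg_eval (s : nat) (a : 'I_s -> R) (p : FA k s) : R :=
  nceval (fun c : k => c%:A) a p.

Definition two_sided_ideal (I : R -> Prop) : Prop :=
  [/\ I 0, (forall x y, I x -> I y -> I (x + y)),
      (forall r x, I x -> I (r * x)) & (forall r x, I x -> I (x * r))].

Definition is_PI : Prop :=
  exists (m : nat) (p : FA k m), p != 0 /\
    forall a : 'I_m -> R, alg_eval a p = 0.

Definition simple_module (V : lmodType R) : Prop :=
  (exists v : V, v <> 0) /\
  forall U : V -> Prop, U 0 -> (forall u v, U u -> U v -> U (u + v)) ->
    (forall (r : R) v, U v -> U (r *: v)) ->
    (forall v, U v -> v = 0) \/ (forall v, U v).

Definition kdim_le (V : lmodType R) (d : nat) : Prop :=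
  exists v : 'I_d -> V, forall x : V, exists c : 'I_d -> k,
    x = \sum_(i < d) ((c i)%:A : R) *: v i.

Definition primitive_ideal (P : R -> Prop) : Prop :=
  exists V : lmodType R, simple_module V /\
    forall r : R, P r <-> (forall v : V, r *: v = 0).

Definition representation (m : nat) (rho : R -> 'M[k]_m) : Prop :=
  [/\ (forall x y, rho (x + y) = rho x + rho y),
      (forall x y, rho (x * y) = rho x *m rho y),
      rho 1 = 1%:M & (forall (a : k) x, rho (a *: x) = a *: rho x)].

Definition irreducible_rep (m : nat) (rho : R -> 'M[k]_m) : Prop :=
  [/\ representation rho, (0 < m)%N &
      forall U : 'M[k]_m, (forall r, (U *m rho r <= U)%MS) ->
        (U == (0 : 'M[k]_m))%MS \/ row_full U].

(* rho_N = diag(rho, ..., rho)  (N/m blocks), for m | N *)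
Definition blockdiag_rep (N m : nat) (rho : R -> 'M[k]_m) : R -> 'M[k]_N :=
  fun r => \matrix_(i < N, j < N)
    match (insub (i %% m)%N : option 'I_m), (insub (j %% m)%N : option 'I_m) with
    | Some a, Some b => if (i %/ m == j %/ m)%N then rho r a b else 0
    | _, _ => 0
    end.

End RSide.

Definition pbool (P : Prop) : bool :=
  if excluded_middle_informative P then true else false.

Lemma pboolP (P : Prop) : reflect P (pbool P).
Proof. by rewrite /pbool; case: excluded_middle_informative => h; constructor. Qed.

Section Generic.
Variables (k : fieldType) (s N : nat) (f : nat -> FA k s).

Definition Chat := {malg k[{cmonom ('I_s * 'I_N * 'I_N)%type}]}.

Definition xhat (l : 'I_s) (i j : 'I_N) : Chat := << ucm (l, i, j) >>.

Definition generic_matrix (l : 'I_s) : 'M[Chat]_N := \matrix_(i, j) xhat l i j.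

Definition pihat (p : FA k s) : 'M[Chat]_N :=
  nceval (fun c : k => (c%:MP : Chat)%:M) generic_matrix p.

Definition Rel (c : Chat) : Prop :=
  forall S : Chat -> Prop, S 0 -> (forall x y, S x -> S y -> S (x + y)) ->
    (forall a x, S x -> S (a * x)) ->
    (forall n i j, S (pihat (f n) i j)) -> S c.

Lemma Rel0 : Rel 0. Proof. by move=> S. Qed.
Lemma RelD x y : Rel x -> Rel y -> Rel (x + y).
Proof. move=> hx hy S S0 SD SM Sg; exact: (SD _ _ (hx S S0 SD SM Sg) (hy S S0 SD SM Sg)). Qed.
Lemma RelM a x : Rel x -> Rel (a * x).
Proof. move=> hx S S0 SD SM Sg; exact: (SM _ _ (hx S S0 SD SM Sg)). Qed.

(* zero ideal when Rel is not proper.          *)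
Definition Relb : Chat -> bool :=
  fun c => if pbool (Rel 1) then c == 0 else pbool (Rel c).

Lemma Relb_idealr : idealr_closed Relb.
Proof.
have E c : (c \in Relb) = (if pbool (Rel 1) then c == 0 else pbool (Rel c)) by [].
case h1: (pbool (Rel 1)).
  split.
  - by rewrite E h1.
  - by rewrite E h1 oner_eq0.
  - by move=> a u v; rewrite !E h1 => /eqP -> /eqP ->; rewrite mulr0 addr0.
split.
- by rewrite E h1; apply/pboolP; apply: Rel0.
- by rewrite E h1.
- move=> a u v; rewrite !E h1 => /pboolP hu /pboolP hv; apply/pboolP.
  by apply: RelD => //; apply: RelM.
Qed.

HB.instance Definition _ := isIdealr.Build Chat Relb Relb_idealr.

Definition Relideal : idealr Chat := Relb.
Definition C := {ideal_quot Relideal}.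

Definition inC (a : k) : C := \pi_C (a%:MP : Chat).

Definition pibar (p : FA k s) : 'M[C]_N := map_mx (\pi_C) (pihat p).

End Generic.

Section Main.
Variables (k : fieldType) (s : nat) (R : algType k) (X : 'I_s -> R)
          (f : nat -> FA k s) (N : nat).

Local Notation C := (C N f).
Local Notation inC := (@inC k s N f).

Definition piR (r : R) : 'M[C]_N :=
  @pibar k s N f (epsilon (inhabits 0) (fun p : FA k s => alg_eval X p = r)).

Definition Tsub (c : C) : Prop :=
  forall S : C -> Prop, (forall a, S (inC a)) ->
    (forall x y, S x -> S y -> S (x + y)) ->
    (forall x y, S x -> S y -> S (x * y)) ->
    (forall (r : R) (i : nat), S (char_poly (piR r))`_i) -> S c.

Definition T_ideal (m : C -> Prop) : Prop :=
  [/\ (forall c, m c -> Tsub c), m 0,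
      (forall x y, m x -> m y -> m (x + y)) &
      (forall t c, Tsub t -> m c -> m (t * c))].

Definition maximal_T (m : C -> Prop) : Prop :=
  [/\ T_ideal m, ~ m 1 &
      forall m', T_ideal m' -> (forall c, m c -> m' c) -> ~ m' 1 ->
        forall c, m' c -> m c].

Definition MpiIM (I : R -> Prop) (A : 'M[C]_N) : Prop :=
  exists n (a : 'I_n -> 'M[C]_N) (x : 'I_n -> R) (b : 'I_n -> 'M[C]_N),
    (forall i, I (x i)) /\ A = \sum_(i < n) a i *m piR (x i) *m b i.

(* J = (M pi(I) M) ∩ T, with C identified with the scalar matrices *)
Definition Jof (I : R -> Prop) (c : C) : Prop := Tsub c /\ MpiIM I c%:M.

Definition rho_tilde (sigma : R -> 'M[k]_N) : 'M[C]_N -> 'M[k]_N :=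
  epsilon (inhabits (fun _ => 0)) (fun g : 'M[C]_N -> 'M[k]_N =>
    (forall A B, g (A + B) = g A + g B) /\
    (forall A B, g (A *m B) = g A *m g B) /\
    g 1%:M = 1%:M /\
    (forall a A, g (inC a *: A) = a *: g A) /\
    (forall A : 'M[k]_N, g (map_mx inC A) = A) /\
    (forall r, g (piR r) = sigma r)).

Definition chosen_irrep (P : R -> Prop) : {m : nat & R -> 'M[k]_m} :=
  epsilon (inhabits (existT (fun m => R -> 'M[k]_m) 0%N (fun _ => 0)))
    (fun mr => irreducible_rep (projT2 mr) /\
       forall r, P r <-> projT2 mr r = 0).

Definition Psi (P : R -> Prop) : C -> Prop :=
  fun c => Tsub c /\
    rho_tilde (blockdiag_rep N (projT2 (chosen_irrep P))) c%:M = 0.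

Definition V_R (I : R -> Prop) (P : R -> Prop) : Prop :=
  primitive_ideal P /\ (forall r, I r -> P r).
Definition W_R (I : R -> Prop) (P : R -> Prop) : Prop :=
  primitive_ideal P /\ ~ (forall r, I r -> P r).
Definition V_T (J : C -> Prop) (m : C -> Prop) : Prop :=
  maximal_T m /\ (forall c, J c -> m c).
Definition W_T (J : C -> Prop) (m : C -> Prop) : Prop :=
  maximal_T m /\ ~ (forall c, J c -> m c).

Definition image_Psi (m : C -> Prop) : Prop :=
  exists P, primitive_ideal P /\ Psi P = m.

End Main.

From HB Require Import structures.
From Stdlib Require Import ClassicalEpsilon Classical.
From mathcomp Require Import all_boot all_order all_algebra.
From mathcomp Require Import ring_quotient generic_quotient.
From mathcomp Require Import finmap monalg zify.
Set Implicit Arguments.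
Unset Strict Implicit.
Unset Printing Implicit Defensive.
Import GRing.Theory.
Local Open Scope ring_scope.
Local Open Scope quotient_scope.

(* Let [P] be primitive and [rho] the chosen irreducible representation with
   kernel [P]. The extension of [rho_N] to [M = M_N(C)] is [map_mx psi] for a
   character [psi : C -> k] that is the identity on [k], and [Psi(P)] is the
   kernel of [psi] on [T], hence a maximal ideal of [T]. Thus [Psi(P)] lies in
   [V_T(J)] iff [psi] kills [J]. If [I ⊆ P] then [rho_N] kills [pi(I)], so
   [psi] kills [M pi(I) M]. If [I ⊄ P], Burnside's theorem ([k] algebraically
   closed, [rho] irreducible) gives [x ∈ I] with [rho x = 1]; then
   [det pi(x) = pi(x) adj pi(x)] lies in [M pi(I) M], and it lies in [T] as a
   coefficient of a characteristic polynomial up to sign, while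
   [psi (det pi(x)) = det (rho_N x) = 1]. So [Psi(P) ⊇ J] iff [P ⊇ I], which
   gives both equalities. *)

Section Subspaces.
Variable K : fieldType.

Lemma subspace_submx n (S : 'rV[K]_n -> Prop) :
  S 0 -> (forall u v, S u -> S v -> S (u + v)) -> (forall a u, S u -> S (a *: u)) ->
  exists p (B : 'M[K]_(p, n)), forall u, S u <-> (u <= B)%MS.
Proof.
move=> S0 SD SZ.
pose Q r := exists p (B : 'M[K]_(p, n)), (forall w, S (w *m B)) /\ \rank B = r.
have Q0 : exists r, pbool (Q r).
  exists 0%N; apply/pboolP; exists 0%N, 0; rewrite mxrank0; split=> // w.
  by rewrite mulmx0.
have Qn r : pbool (Q r) -> (r <= n)%N.
  by move=> /pboolP [p [B [_ <-]]]; exact: rank_leq_col.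
have [r /pboolP [p [B [SB rB]]] rmax] := ex_maxnP Q0 Qn.
exists p, B => u; split; last by case/submxP=> D ->.
move=> Su; apply: contraT => nuB.
have : (B < col_mx B u)%MS.
  rewrite ltmxE -!addsmxE addsmxSl /=.
  by apply: contra nuB => /(submx_trans (addsmxSr B u)).
rewrite ltmxErank => /andP [_]; rewrite ltnNge rB => /negbTE <-.
apply: rmax; apply/pboolP; exists (p + 1)%N, (col_mx B u); split => // w.
rewrite -[w]hsubmxK mul_row_col [rsubmx w]mx11_scalar mul_scalar_mx.
by apply: SD; [exact: SB | exact: SZ].
Qed.

Lemma subspace_annihilator n (U : 'cV[K]_n -> Prop) :
  U 0 -> (forall u v, U u -> U v -> U (u + v)) -> (forall a u, U u -> U (a *: u)) ->
  ~ (forall w, U w) -> exists2 u : 'rV[K]_n, u != 0 & forall w, U w -> u *m w = 0.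
Proof.
move=> U0 UD UZ notU.
have [p [B hB]] : exists p (B : 'M[K]_(p, n)), forall u, U u^T <-> (u <= B)%MS.
  apply: subspace_submx => [|u v Uu Uv|a u Uu]; rewrite ?trmx0 ?linearD ?linearZ //.
    exact: UD.
  exact: UZ.
have nfullB : ~~ row_full B.
  apply/negP => fullB; apply: notU => w; rewrite -[w]trmxK; apply/hB.
  exact: submx_full.
have : kermx B^T != 0.
  by rewrite -mxrank_eq0 mxrank_ker mxrank_tr subn_eq0 -ltnNge ltn_neqAle rank_leq_col andbT.
case/rowV0Pn => u /sub_kermxP uB nzu; exists u => // w Uw.
have /submxP [D wD] : (w^T <= B)%MS by apply/hB; rewrite trmxK.
by rewrite -[w]trmxK wD trmx_mul mulmxA uB mul0mx.
Qed.

Lemma mxrank_mul_lt m n p (T : 'M[K]_(m, n)) (A : 'M_(n, p)) (w : 'rV_n) :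
  (w <= T)%MS -> w != 0 -> w *m A = 0 -> (\rank (T *m A) < \rank T)%N.
Proof.
move=> wT nzw wA; rewrite -(mxrank_mul_ker T A) -[X in (X < _)%N]addn0 ltn_add2l.
rewrite lt0n mxrank_eq0; apply: contraNneq nzw => TA0.
by rewrite -submx0 -TA0 sub_capmx wT; apply/sub_kermxP.
Qed.

End Subspaces.

Lemma stable_eigenvector (F : closedFieldType) n (U A : 'M[F]_n) :
  stablemx U A -> U != 0 ->
  exists lam (w : 'rV_n), [/\ (w <= U)%MS, w != 0 & w *m A = lam *: w].
Proof.
move=> sUA nzU; set V := row_base U.
have freeV : row_free V := row_base_free U.
have [lam] : exists lam, eigenvalue (conjmx V A) lam.
  have : size (char_poly (conjmx V A)) != 1%N by rewrite size_char_poly eqSS mxrank_eq0.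
  by case/closed_rootP => lam; exists lam; rewrite eigenvalue_root_char.
case/eigenvalueP => x /eigenspaceP; rewrite sub_eigenspace_conjmx ?stablemx_row_base //.
move=> /eigenspaceP xVA nzx; exists lam, (x *m V); split => //.
  by rewrite (submx_trans (submxMl _ _)) ?eq_row_base.
by rewrite mulmx_free_eq0.
Qed.

Lemma mul_delta_mx_mid (K : comNzRingType) n (i a b j : 'I_n) (G : 'M[K]_n) :
  delta_mx i a *m G *m delta_mx b j = G a b *: delta_mx i j.
Proof.
rewrite -(mul_delta_mx (0 : 'I_1) i a) -(mul_delta_mx (0 : 'I_1) b j).
rewrite -!mulmxA (mulmxA (delta_mx 0 a)) (mulmxA _ (delta_mx b 0)).
rewrite -rowE -colE [col b (row a G)]mx11_scalar !mxE.
by rewrite mul_scalar_mx -scalemxAr mul_delta_mx.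
Qed.

Section Representation.
Variables (k : fieldType) (R : algType k) (m : nat) (rho : R -> 'M[k]_m).
Hypothesis hrep : representation rho.

Lemma repD x y : rho (x + y) = rho x + rho y. Proof. by case: hrep. Qed.
Lemma repM x y : rho (x * y) = rho x *m rho y. Proof. by case: hrep. Qed.
Lemma rep1 : rho 1 = 1%:M. Proof. by case: hrep. Qed.
Lemma repZ a x : rho (a *: x) = a *: rho x. Proof. by case: hrep. Qed.
Lemma rep0 : rho 0 = 0.
Proof. by rewrite -[0 : R](scale0r 0) repZ scale0r. Qed.
Lemma rep_sum I (r : seq I) (P : pred I) (F : I -> R) :
  rho (\sum_(i <- r | P i) F i) = \sum_(i <- r | P i) rho (F i).
Proof. exact: (big_morph rho repD rep0). Qed.
Lemma rep_scalar a : rho a%:A = a%:M.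
Proof. by rewrite repZ rep1 scalemx1. Qed.

End Representation.

Section Irreducible.
Variables (k : fieldType) (R : algType k) (m : nat) (rho : R -> 'M[k]_m).
Hypothesis hirr : irreducible_rep rho.

Let hrep : representation rho. Proof. by case: hirr. Qed.

Lemma irrep_row_submod (U : 'rV[k]_m -> Prop) :
  U 0 -> (forall u v, U u -> U v -> U (u + v)) -> (forall r u, U u -> U (u *m rho r)) ->
  (forall u, U u -> u = 0) \/ (forall u, U u).
Proof.
move=> U0 UD UM.
have UZ a u : U u -> U (a *: u) by move/(UM a%:A); rewrite rep_scalar // mul_mx_scalar.
have [p [B hB]] := subspace_submx U0 UD UZ.
have Binv r : (<<B>>%MS *m rho r <= <<B>>)%MS.
  rewrite genmxE (eqmxMr _ (genmxE _)); apply/row_subP => i; rewrite row_mul.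
  by apply/hB/UM/hB; exact: row_sub.
case: hirr => _ _ /(_ _ Binv) [/andP [B0 _] | fullB]; [left | right] => u.
  move/hB => uB; apply/eqP; rewrite -submx0; apply: submx_trans B0.
  by rewrite genmxE.
by apply/hB/submx_full; rewrite -(eq_row_full (genmxE B)).
Qed.

Lemma irrep_col_submod (U : 'cV[k]_m -> Prop) :
  U 0 -> (forall u v, U u -> U v -> U (u + v)) -> (forall r w, U w -> U (rho r *m w)) ->
  (forall w, U w -> w = 0) \/ (forall w, U w).
Proof.
move=> U0 UD UM.
have UZ a w : U w -> U (a *: w) by move/(UM a%:A); rewrite rep_scalar // mul_scalar_mx.
pose Ann (u : 'rV[k]_m) := forall w, U w -> u *m w = 0.
have [Ann0 | Ann_all] : (forall u, Ann u -> u = 0) \/ (forall u, Ann u).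
- apply: irrep_row_submod => [w _|u1 u2 h1 h2 w Uw|r u hu w Uw].
  + by rewrite mul0mx.
  + by rewrite mulmxDl h1 ?h2 ?addr0.
  + by rewrite -mulmxA hu //; exact: UM.
- right; apply: NNPP => /(subspace_annihilator U0 UD UZ) [u nzu /Ann0 u0].
  by rewrite u0 eqxx in nzu.
- left => w Uw; apply/colP => i; have := Ann_all (delta_mx 0 i) w Uw.
  by rewrite -rowE => /rowP /(_ 0); rewrite !mxE.
Qed.

Lemma irrep_row_trans (v : 'rV[k]_m) : v != 0 -> forall u, exists r, v *m rho r = u.
Proof.
move=> nzv; pose U u := exists r, v *m rho r = u.
have [v0 | //] : (forall u, U u -> u = 0) \/ (forall u, U u).
  apply: irrep_row_submod => [|_ _ [r1 <-] [r2 <-]|r _ [r' <-]].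
  - by exists 0; rewrite rep0 // mulmx0.
  - by exists (r1 + r2); rewrite repD // mulmxDr.
  - by exists (r' * r); rewrite repM // mulmxA.
by rewrite (v0 v) ?eqxx // in nzv; exists 1; rewrite rep1 // mulmx1.
Qed.

Lemma irrep_col_trans (w : 'cV[k]_m) : w != 0 -> forall c, exists r, rho r *m w = c.
Proof.
move=> nzw; pose U c := exists r, rho r *m w = c.
have [w0 | //] : (forall c, U c -> c = 0) \/ (forall c, U c).
  apply: irrep_col_submod => [|_ _ [r1 <-] [r2 <-]|r _ [r' <-]].
  - by exists 0; rewrite rep0 // mul0mx.
  - by exists (r1 + r2); rewrite repD // mulmxDl.
  - by exists (r * r'); rewrite repM // mulmxA.
by rewrite (w0 w) ?eqxx // in nzw; exists 1; rewrite rep1 // mul1mx.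
Qed.

End Irreducible.

Section Burnside.
Variables (k : closedFieldType) (R : algType k) (m : nat) (rho : R -> 'M[k]_m).
Hypothesis hirr : irreducible_rep rho.
Variable I : R -> Prop.
Hypothesis hI : two_sided_ideal I.

Let hrep : representation rho. Proof. by case: hirr. Qed.

Let image A := exists2 x, I x & rho x = A.

Let imageD A B : image A -> image B -> image (A + B).
Proof.
case: hI => _ ID _ _ [x Ix <-] [y Iy <-].
by exists (x + y); [apply: ID | rewrite repD].
Qed.

Let imageMl r A : image A -> image (rho r *m A).
Proof.
case: hI => _ _ IM _ [x Ix <-].
by exists (r * x); [apply: IM | rewrite repM].
Qed.

Let imageMr r A : image A -> image (A *m rho r).
Proof.
case: hI => _ _ _ IM [x Ix <-].
by exists (x * r); [apply: IM | rewrite repM].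
Qed.

Let imageZ a A : image A -> image (a *: A).
Proof. by move/(imageMl a%:A); rewrite rep_scalar // mul_scalar_mx. Qed.

(* [M := rho a *m T] stabilises the row space of [T], in which [w1] is not an
   eigenvector of [M] by the choice of [a]; so for an eigenvalue [lam] of [M]
   there, [T *m (M - lam)] is nonzero and of smaller rank. *)
Lemma irrep_image_rank_lt T : image T -> (1 < \rank T)%N ->
  exists2 T', image T' & T' != 0 /\ (\rank T' < \rank T)%N.
Proof.
move=> imT rT; have nzT : T != 0 by rewrite -mxrank_eq0 -lt0n ltnW.
have [w1 w1T nzw1] := rowV0Pn nzT.
have [i ni] : exists i, ~~ (row i T <= w1)%MS.
  apply/row_subPn; apply/negP => /mxrankS; rewrite rank_rV nzw1.
  by apply/negP; rewrite -ltnNge.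
have [a w1a] := irrep_row_trans hirr nzw1 (delta_mx 0 i).
set M := rho a *m T.
have stableM : stablemx T M by rewrite /M mulmxA submxMl.
have [lam [w [wT nzw wM]]] := stable_eigenvector stableM nzT.
exists (T *m M - lam *: T); last split.
- have [t _ tT] := imT.
  rewrite -scaleNr; apply: imageD; last exact: imageZ.
  by rewrite /M mulmxA -{2}tT; apply: imageMr; apply: imageMr.
- apply: contraNneq ni => T'0; case/submxP: w1T => u1 w1u1.
  have : u1 *m (T *m M - lam *: T) = 0 by rewrite T'0 mulmx0.
  rewrite mulmxBr -scalemxAr !mulmxA -w1u1 /M w1a -rowE.
  by move/eqP; rewrite subr_eq0 => /eqP ->; rewrite scalemx_sub.
- rewrite -mul_mx_scalar -mulmxBr; apply: mxrank_mul_lt wT nzw _.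
  by rewrite mulmxBr wM mul_mx_scalar subrr.
Qed.

Lemma irrep_image_rank1 T : image T -> T != 0 -> exists2 T', image T' & \rank T' = 1%N.
Proof.
have [n] := ubnP (\rank T); elim: n T => // n IHn T rTn imT nzT.
have [rT1 | rT1] := eqVneq (\rank T) 1%N; first by exists T.
have rT : (1 < \rank T)%N by rewrite ltn_neqAle eq_sym rT1 lt0n mxrank_eq0.
have [T' imT' [nzT' rT']] := irrep_image_rank_lt imT rT.
exact: IHn (leq_trans rT' _) imT' nzT'.
Qed.

(* A rank one element [c *m b] of the image is moved by the two transitivity
   lemmas onto every matrix unit [delta_mx i i]. *)
Lemma irrep_image_unit T : image T -> \rank T = 1%N -> image 1%:M.
Proof.
move=> imT rT; have nzT : T != 0 by rewrite -mxrank_eq0 rT.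
have [b bT nzb] := rowV0Pn nzT.
have Tb : (T <= b)%MS.
  by have := mxrank_leqif_eq bT; rewrite rT rank_rV nzb => -[_ /esym /andP []].
set c := T *m pinvmx b.
have Tcb : T = c *m b by rewrite /c mulmxKpV.
have nzc : c != 0 by apply: contraNneq nzT => c0; rewrite Tcb c0 mul0mx.
clearbody c.
have diag i : image (delta_mx i i).
  have [a1 a1c] := irrep_col_trans hirr nzc (delta_mx i 0).
  have [a2 ba2] := irrep_row_trans hirr nzb (delta_mx 0 i).
  have := imageMr a2 (imageMl a1 imT).
  by rewrite Tcb !mulmxA a1c -mulmxA ba2 mul_delta_mx.
rewrite (mx1_sum_delta k m); elim/big_ind: _ => //.
by exists 0; [case: hI | rewrite rep0].
Qed.

Lemma irrep_ideal_one : (exists2 y, I y & rho y != 0) -> exists2 x, I x & rho x = 1%:M.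
Proof.
case=> y Iy nzy; have [T imT rT] := irrep_image_rank1 (ex_intro2 _ _ y Iy erefl) nzy.
exact: irrep_image_unit imT rT.
Qed.

End Burnside.

Section ColumnModule.
Variables (k : fieldType) (R : algType k) (m : nat) (rho : R -> 'M[k]_m).
Hypothesis hrep : representation rho.

(* The proof arguments of [rep_colmod], [quot_eval] and [scalar_restriction]
   let the structures declared on them depend on these hypotheses. *)
Definition rep_colmod of representation rho : Type := 'cV[k]_m.
HB.instance Definition _ := GRing.Zmodule.on (rep_colmod hrep).

Definition rep_colscale (r : R) (v : rep_colmod hrep) : rep_colmod hrep :=
  rho r *m (v : 'cV[k]_m).

Lemma rep_colscaleA a b v : rep_colscale a (rep_colscale b v) = rep_colscale (a * b) v.
Proof. by rewrite /rep_colscale repM // mulmxA. Qed.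
Lemma rep_colscale1 : left_id 1 rep_colscale.
Proof. by move=> v; rewrite /rep_colscale rep1 // mul1mx. Qed.
Lemma rep_colscaleDr : right_distributive rep_colscale +%R.
Proof. by move=> r u v; rewrite /rep_colscale mulmxDr. Qed.
Lemma rep_colscaleDl v : {morph rep_colscale^~ v : a b / a + b}.
Proof. by move=> a b; rewrite /rep_colscale repD // mulmxDl. Qed.

HB.instance Definition _ := GRing.Zmodule_isLmodule.Build R (rep_colmod hrep)
  rep_colscaleA rep_colscale1 rep_colscaleDr rep_colscaleDl.

Lemma rep_colmod_simple : irreducible_rep rho -> simple_module (rep_colmod hrep).
Proof.
move=> hirr; split; last exact: irrep_col_submod.
have m0 : (0 < m)%N by case: hirr.
exists (delta_mx (Ordinal m0) 0 : 'cV[k]_m) => /matrixP /(_ (Ordinal m0) 0).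
by rewrite !mxE !eqxx => /eqP; rewrite oner_eq0.
Qed.

Lemma rep_colmod_dim d : kdim_le (rep_colmod hrep) d -> (m <= d)%N.
Proof.
case=> v hv; pose W : 'M[k]_(d, m) := \matrix_(i, j) (v i : 'cV[k]_m) j 0.
have Wspan (x : 'cV[k]_m) : (x^T <= W)%MS.
  have [c ->] := hv x; rewrite linear_sum /=; apply: summx_sub => i _.
  have -> : ((c i)%:A : R) *: v i = c i *: (v i : 'cV[k]_m) :> 'cV[k]_m.
    by rewrite [LHS]/(rep_colscale _ _) rep_scalar // mul_scalar_mx.
  rewrite linearZ /=; apply: scalemx_sub.
  have -> : (v i : 'cV[k]_m)^T = row i W by apply/rowP => j; rewrite !mxE.
  exact: row_sub.
have fullW : row_full W.
  rewrite -sub1mx; apply/row_subP => j; rewrite -[row j _]trmxK; exact: Wspan.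
by rewrite -(eqP fullW) rank_leq_row.
Qed.

End ColumnModule.

Section ModuleCoordinates.
Variables (k : fieldType) (R : algType k) (V : lmodType R).

Lemma scalar_actA (a b : k) (x : V) : (a%:A : R) *: ((b%:A : R) *: x) = (a * b)%:A *: x.
Proof. by rewrite scalerA -scalerAl mul1r scalerA. Qed.

Lemma scalar_actC (r : R) (a : k) (x : V) : r *: ((a%:A : R) *: x) = a%:A *: (r *: x).
Proof. by rewrite !scalerA mulr_algr mulr_algl. Qed.

(* A spanning family [v] gives a surjection [k^d -> V]; restricting it to a
   complement of its kernel gives coordinates on [V]. *)
Lemma module_coordinates d (v : 'I_d -> V) :
    (forall x, exists c : 'I_d -> k, x = \sum_(i < d) (c i)%:A *: v i) ->
  exists m (bb : 'rV[k]_m -> V) (crd : V -> 'rV[k]_m),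
    [/\ cancel bb crd, cancel crd bb, {morph bb : e1 e2 / e1 + e2}
      & forall a e, bb (a *: e) = (a%:A : R) *: bb e].
Proof.
move=> hspan; pose comb (c : 'rV[k]_d) := \sum_i (c 0 i)%:A *: v i.
have combD c1 c2 : comb (c1 + c2) = comb c1 + comb c2.
  by rewrite /comb -big_split; apply: eq_bigr => i _; rewrite mxE !scalerDl.
have combZ a c : comb (a *: c) = a%:A *: comb c.
  by rewrite /comb scaler_sumr; apply: eq_bigr => i _; rewrite mxE scalar_actA.
have comb0 : comb 0 = 0 by rewrite /comb big1 // => i _; rewrite mxE scale0r scale0r.
have [p [K kerK]] : exists p (K : 'M[k]_(p, d)), forall c, comb c = 0 <-> (c <= K)%MS.
  apply: subspace_submx => [//|c1 c2 h1 h2|a c h]; first by rewrite combD h1 h2 addr0.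
  by rewrite combZ h scaler0.
pose B := row_base (K^C)%MS.
pose bb (e : 'rV[k]_(\rank (K^C)%MS)) := comb (e *m B).
have bbD : {morph bb : e1 e2 / e1 + e2} by move=> e1 e2; rewrite /bb mulmxDl combD.
have bbZ a e : bb (a *: e) = a%:A *: bb e by rewrite /bb -scalemxAl combZ.
have bbN e : bb (- e) = - bb e.
  by apply: (addrI (bb e)); rewrite -bbD !subrr /bb mul0mx comb0.
have bb_inj : injective bb.
  move=> e1 e2 eq12; apply/eqP; rewrite -subr_eq0.
  have /kerK e12K : bb (e1 - e2) = 0 by rewrite bbD bbN eq12 subrr.
  have e12Kc : ((e1 - e2) *m B <= K^C)%MS.
    by rewrite (submx_trans (submxMl _ _)) ?eq_row_base.
  have : ((e1 - e2) *m B <= K :&: K^C)%MS by rewrite sub_capmx e12K.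
  by rewrite capmx_compl submx0 mulmx_free_eq0 ?row_base_free.
have bb_surj x : exists e, bb e = x.
  have [c ->] := hspan x.
  have : (\row_i c i <= K + K^C)%MS by apply: submx_full; exact: addsmx_compl_full.
  case/sub_addsmxP => -[u1 u2] /= cu.
  have /submxP [e eB] : (u2 *m K^C <= B)%MS by rewrite eq_row_base submxMl.
  exists e; transitivity (comb (\row_i c i)).
    by rewrite cu combD (proj2 (kerK _) (submxMl _ _)) add0r /bb eB.
  by apply: eq_bigr => i _; rewrite mxE.
pose crd x := epsilon (inhabits 0) (fun e => bb e = x).
have crdK : cancel crd bb.
  by move=> x; apply: (epsilon_spec (inhabits 0) (fun e => bb e = x)); exact: bb_surj.
exists (\rank (K^C)%MS), bb, crd; split=> // e.
by apply: bb_inj; rewrite crdK.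
Qed.

End ModuleCoordinates.

Section CoordinateRepresentation.
Variables (k : fieldType) (R : algType k) (V : lmodType R) (m : nat).
Variables (bb : 'rV[k]_m -> V) (crd : V -> 'rV[k]_m).
Hypotheses (bbK : cancel bb crd) (crdK : cancel crd bb).
Hypotheses (bbD : {morph bb : e1 e2 / e1 + e2})
  (bbZ : forall a e, bb (a *: e) = (a%:A : R) *: bb e).

Let bb0 : bb 0 = 0.
Proof. by apply: (addrI (bb 0)); rewrite -bbD !addr0. Qed.
Let crdD : {morph crd : x y / x + y}.
Proof. by move=> x y; apply: (can_inj bbK); rewrite bbD !crdK. Qed.
Let crdZ a x : crd ((a%:A : R) *: x) = a *: crd x.
Proof. by apply: (can_inj bbK); rewrite bbZ !crdK. Qed.
Let crd0 : crd 0 = 0.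
Proof. by rewrite -bb0 bbK. Qed.

Definition coord_actmx (r : R) : 'M[k]_m := \matrix_j crd (r *: bb (delta_mx 0 j)).

Lemma crd_act r x : crd (r *: x) = crd x *m coord_actmx r.
Proof.
rewrite -{1}(crdK x) {1}[crd x]row_sum_delta (big_morph bb bbD bb0) scaler_sumr.
rewrite (big_morph crd crdD crd0) mulmx_sum_row; apply: eq_bigr => j _.
by rewrite bbZ scalar_actC crdZ rowK.
Qed.

Definition coord_rep (r : R) : 'M[k]_m := (coord_actmx r)^T.

Lemma coord_rep_rep : representation coord_rep.
Proof.
rewrite /coord_rep; split => [x y|x y||a x].
- rewrite -linearD; congr _^T; apply/row_matrixP => j.
  by rewrite linearD /= !rowK scalerDl crdD.
- rewrite -trmx_mul; congr _^T; apply/row_matrixP => j.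
  by rewrite row_mul !rowK -scalerA crd_act.
- rewrite -trmx1; congr _^T; apply/row_matrixP => j.
  by rewrite rowK scale1r bbK rowE mulmx1.
- rewrite -linearZ; congr _^T; apply/row_matrixP => j.
  by rewrite linearZ /= !rowK -mulr_algl -scalerA crdZ.
Qed.

Lemma coord_rep_ker r : coord_rep r = 0 <-> forall x : V, r *: x = 0.
Proof.
split => [r0 x | r0]; last first.
  apply/trmx_inj; rewrite trmx0 trmxK; apply/row_matrixP => j.
  by rewrite rowK r0 crd0 row0.
rewrite -[r *: x]crdK crd_act.
have -> : coord_actmx r = 0 by rewrite -[coord_actmx r]trmxK -/(coord_rep r) r0 trmx0.
by rewrite mulmx0 bb0.
Qed.

Lemma coord_rep_irr : simple_module V -> irreducible_rep coord_rep.
Proof.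
case=> [[x0 nzx0] simpleV]; split; first exact: coord_rep_rep.
  have [j _] : exists j : 'I_m, crd x0 0 j != 0.
    apply: NNPP => nz; apply: nzx0; rewrite -[x0]crdK -bb0; congr bb.
    by apply/rowP => j; rewrite mxE; apply/eqP/negPn/negP => ?; apply: nz; exists j.
  exact: leq_ltn_trans (leq0n j) (ltn_ord j).
move=> U stableU; pose Ann (x : V) := U *m (crd x)^T = 0.
have [Ann0 | Ann_all] : (forall x, Ann x -> x = 0) \/ (forall x, Ann x).
- apply: simpleV => [|x y Ux Uy|r x Ux]; rewrite /Ann.
  + by rewrite crd0 trmx0 mulmx0.
  + by rewrite crdD linearD mulmxDr Ux Uy addr0.
  + rewrite crd_act trmx_mul -/(coord_rep r) mulmxA.
    by case/submxP: (stableU r) => D ->; rewrite -mulmxA Ux mulmx0.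
- right; have : row_free U^T.
    rewrite -kermx_eq0; apply/eqP/row_matrixP => i; rewrite row0.
    apply: (can_inj bbK); rewrite bb0; apply: Ann0; rewrite /Ann bbK.
    by apply: trmx_inj; rewrite trmx_mul trmxK trmx0; apply/sub_kermxP/row_sub.
  by rewrite /row_free mxrank_tr.
- left; suff -> : U = 0 by rewrite !submx_refl.
  apply/matrixP => i j; have := Ann_all (bb (delta_mx 0 j)).
  by rewrite /Ann bbK trmx_delta -colE => /colP /(_ i); rewrite !mxE.
Qed.
End CoordinateRepresentation.

Lemma simple_module_rep (k : fieldType) (R : algType k) (V : lmodType R) d :
  simple_module V -> kdim_le V d ->
  exists m (rho : R -> 'M[k]_m),
    irreducible_rep rho /\ forall r, (forall x : V, r *: x = 0) <-> rho r = 0.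
Proof.
move=> simpleV [v /module_coordinates [m [bb [crd [bbK crdK bbD bbZ]]]]].
exists m, (coord_rep bb crd); split; first exact: coord_rep_irr.
by move=> r; rewrite coord_rep_ker.
Qed.

Section BlockDiagonal.
Variables (K : comNzRingType) (N m : nat).
Hypotheses (m_gt0 : (0 < m)%N) (m_dvd : (m %| N)%N).

Local Notation ordm i := (Ordinal (ltn_pmod i m_gt0)).

Definition blockdiag_mx (A : 'M[K]_m) : 'M[K]_N :=
  \matrix_(i, j) if (i %/ m == j %/ m)%N then A (ordm i) (ordm j) else 0.

Lemma sum_block c (G : 'I_m -> K) : (c * m < N)%N ->
  \sum_(l < N) (if (l %/ m == c)%N then G (ordm l) else 0) = \sum_(t < m) G t.
Proof.
move=> cN; have cmN : (c * m + m <= N)%N.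
  case/dvdnP: m_dvd cN => q ->; rewrite ltn_mul2r m_gt0 /= => cq.
  by rewrite -mulSnr leq_mul2r cq orbT.
rewrite -(big_mkord xpredT (fun l => if (l %/ m == c)%N then G (ordm l) else 0)).
rewrite (big_cat_nat (n := c * m)) //=; last by lia.
rewrite (big_cat_nat (n := c * m + m) (m := c * m)) //=; last by lia.
rewrite big1_seq => [|l /andP [_]]; last first.
  rewrite mem_index_iota => /andP [_ lcm].
  by rewrite ltn_eqF // ltn_divLR.
rewrite [X in _ + (_ + X)]big1_seq => [|l /andP [_]]; last first.
  rewrite mem_index_iota => /andP [cml _].
  by rewrite gtn_eqF // -[(c < _)%N]/(c.+1 <= _)%N leq_divRL // mulSnr.
rewrite add0r addr0 -{1}[(c * m)%N]add0n big_addn addnC addnK big_mkord.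
apply: eq_bigr => t _; rewrite addnC divnMDl // divn_small // addn0 eqxx.
by congr G; apply: val_inj; rewrite /= modnMDl modn_small.
Qed.

Lemma blockdiag_mxD A B : blockdiag_mx (A + B) = blockdiag_mx A + blockdiag_mx B.
Proof. by apply/matrixP => i j; rewrite !mxE; case: ifP; rewrite ?mxE ?addr0. Qed.

Lemma blockdiag_mxZ a A : blockdiag_mx (a *: A) = a *: blockdiag_mx A.
Proof. by apply/matrixP => i j; rewrite !mxE; case: ifP; rewrite ?mxE ?mulr0. Qed.

Lemma blockdiag_mx0 : blockdiag_mx 0 = 0.
Proof. by rewrite -(scale0r 0) blockdiag_mxZ scale0r. Qed.

Lemma blockdiag_mxM A B : blockdiag_mx (A *m B) = blockdiag_mx A *m blockdiag_mx B.
Proof.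
apply/matrixP => i j; rewrite !mxE; case: eqP => [ij | nij]; last first.
  rewrite big1 // => l _; rewrite !mxE.
  by do 2!case: eqP => ? //; rewrite ?mul0r ?mulr0 //; case: nij; congruence.
have iN : ((i %/ m) * m < N)%N by rewrite (leq_ltn_trans (leq_divM i m)).
rewrite -(sum_block _ iN); apply: eq_bigr => l _; rewrite !mxE.
have [-> | nli] := eqVneq (l %/ m)%N (i %/ m)%N; first by rewrite -ij !eqxx.
by rewrite mul0r.
Qed.

Lemma blockdiag_mx1 : blockdiag_mx 1%:M = 1%:M.
Proof.
apply/matrixP => i j; rewrite !mxE.
have -> : (i == j) = (i %/ m == j %/ m)%N && (ordm i == ordm j).
  apply/eqP/andP => [-> // | [/eqP ij /eqP/(congr1 val) /= ij']].
  by apply: val_inj; rewrite /= (divn_eq i m) (divn_eq j m) ij ij'.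
by case: ifP.
Qed.

End BlockDiagonal.

Lemma blockdiag_repE (k : fieldType) (R : algType k) N m (m_gt0 : (0 < m)%N)
  (rho : R -> 'M[k]_m) r : blockdiag_rep N rho r = blockdiag_mx N m_gt0 (rho r).
Proof.
apply/matrixP => i j; rewrite !mxE.
rewrite (insubT (fun x => x < m)%N (ltn_pmod i m_gt0)).
by rewrite (insubT (fun x => x < m)%N (ltn_pmod j m_gt0)).
Qed.

Lemma blockdiag_rep_rep (k : fieldType) (R : algType k) N m (rho : R -> 'M[k]_m) :
  (0 < m)%N -> (m %| N)%N -> representation rho -> representation (blockdiag_rep N rho).
Proof.
move=> m_gt0 m_dvd [hD hM h1 hZ]; split => [x y|x y||a x]; rewrite !(blockdiag_repE N m_gt0).
- by rewrite hD blockdiag_mxD.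
- by rewrite hM blockdiag_mxM.
- by rewrite h1 blockdiag_mx1.
- by rewrite hZ blockdiag_mxZ.
Qed.

Section CmonomEval.
Variables (k : comNzRingType) (T : finType) (v : T -> k).

Definition cmonom_eval (mo : cmonom T) : k := \prod_t v t ^+ mo t.

Lemma cmonom_eval_is_mmorphism : mmorphism cmonom_eval.
Proof.
split=> [m1 m2|]; last by rewrite /cmonom_eval big1 // => t _; rewrite cm1 expr0.
by rewrite /cmonom_eval -big_split; apply: eq_bigr => t _; rewrite cmM exprD.
Qed.

HB.instance Definition _ :=
  isMultiplicative.Build (cmonom T) k cmonom_eval cmonom_eval_is_mmorphism.

Lemma cmonom_evalU t : cmonom_eval (ucm t) = v t.
Proof.
rewrite /cmonom_eval (bigD1 t) //= big1 => [|u ut]; first by rewrite cmUU expr1 mulr1.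
by rewrite cmU eq_sym (negbTE ut) expr0.
Qed.

End CmonomEval.

Section ScalarEmbedding.
Variables (k : fieldType) (s N : nat) (f : nat -> FA k s).

Lemma inC_is_zmod_morphism : zmod_morphism (inC N f).
Proof. by move=> a b; rewrite /inC (rmorphB malgC) (rmorphB (\pi_(C N f))). Qed.

Lemma inC_is_monoid_morphism : monoid_morphism (inC N f).
Proof.
split => [|a b]; rewrite /inC; first by rewrite (rmorph1 malgC) (rmorph1 (\pi_(C N f))).
by rewrite (rmorphM malgC) (rmorphM (\pi_(C N f))).
Qed.

HB.instance Definition _ :=
  GRing.isZmodMorphism.Build k (C N f) (inC N f) inC_is_zmod_morphism.
HB.instance Definition _ :=
  GRing.isMonoidMorphism.Build k (C N f) (inC N f) inC_is_monoid_morphism.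

End ScalarEmbedding.

Section GenericEval.
Variables (k : fieldType) (s N : nat) (R : algType k) (X : 'I_s -> R).
Variables (sigma : R -> 'M[k]_N).
Hypothesis hsig : representation sigma.

Definition chat_eval : Chat k s N -> k :=
  mmap (@idfun k) (cmonom_eval (fun t : 'I_s * 'I_N * 'I_N => sigma (X t.1.1) t.1.2 t.2)).
HB.instance Definition _ := GRing.RMorphism.on chat_eval.

Lemma chat_evalC c : chat_eval c%:MP = c.
Proof. exact: mmapC. Qed.

Lemma chat_eval_xhat l i j : chat_eval (xhat k l i j) = sigma (X l) i j.
Proof. by rewrite /chat_eval /xhat mmapU /= mul1r cmonom_evalU. Qed.

Lemma map_chat_eval_pihat p : map_mx chat_eval (pihat N p) = sigma (alg_eval X p).
Proof.
rewrite /pihat /nceval /alg_eval /nceval rep_sum // map_mx_sum.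
apply: eq_bigr => w _; rewrite -mulmxE map_mxM repM // rep_scalar //.
congr (_ *m _); first by rewrite map_scalar_mx /= chat_evalC.
rewrite (big_morph sigma (repM hsig) (rep1 hsig)).
rewrite (big_morph _ (@map_mxM _ _ chat_eval N N N) (@map_mx1 _ _ chat_eval N)).
by apply: eq_bigr => l _; apply/matrixP => i j; rewrite !mxE /= chat_eval_xhat.
Qed.
End GenericEval.

Section QuotientEval.
Variables (k : fieldType) (s N : nat) (f : nat -> FA k s) (R : algType k).
Variables (X : 'I_s -> R) (sigma : R -> 'M[k]_N).
Hypotheses (hsig : representation sigma) (hf0 : forall n, alg_eval X (f n) = 0).

Lemma chat_eval_Relb x : Relb f x -> chat_eval X sigma x = 0.
Proof.
rewrite /Relb; case: ifP => _; first by move/eqP ->; rewrite rmorph0.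
move/pboolP/(_ (fun c => chat_eval X sigma c = 0)); apply=> [|a b ha hb|a b hb|n i j].
- exact: rmorph0.
- by rewrite rmorphD /= ha hb addr0.
- by rewrite rmorphM /= hb mulr0.
have := congr1 (fun M : 'M[k]_N => M i j) (map_chat_eval_pihat X hsig (f n)).
by rewrite mxE /= => ->; rewrite hf0 rep0 // mxE.
Qed.

Definition quot_eval of representation sigma & (forall n, alg_eval X (f n) = 0) :
  C N f -> k := fun c => chat_eval X sigma (repr c).
Local Notation phi := (quot_eval hsig hf0).

Lemma quot_evalE x : phi (\pi_(C N f) x) = chat_eval X sigma x.
Proof.
have : repr (\pi_(C N f) x) - x \in Relideal N f.
  by rewrite Quotient.idealrBE reprK.
by move/chat_eval_Relb/eqP; rewrite rmorphB subr_eq0 => /eqP.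
Qed.

Lemma quot_eval_is_zmod_morphism : zmod_morphism phi.
Proof. by move=> a b; rewrite -[a]reprK -[b]reprK -rmorphB !quot_evalE rmorphB. Qed.

Lemma quot_eval_is_monoid_morphism : monoid_morphism phi.
Proof.
split; first by rewrite -(rmorph1 (\pi_(C N f))) quot_evalE rmorph1.
by move=> a b; rewrite -[a]reprK -[b]reprK -rmorphM !quot_evalE rmorphM.
Qed.

HB.instance Definition _ :=
  GRing.isZmodMorphism.Build (C N f) k phi quot_eval_is_zmod_morphism.
HB.instance Definition _ :=
  GRing.isMonoidMorphism.Build (C N f) k phi quot_eval_is_monoid_morphism.

Lemma quot_eval_inC a : phi (inC N f a) = a.
Proof. by rewrite quot_evalE chat_evalC. Qed.

End QuotientEval.

Definition tilde_spec (k : fieldType) (s : nat) (R : algType k) (X : 'I_s -> R)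
    (f : nat -> FA k s) (N : nat) (sigma : R -> 'M[k]_N) (g : 'M[C N f]_N -> 'M[k]_N) :=
  (forall A B, g (A + B) = g A + g B) /\
  (forall A B, g (A *m B) = g A *m g B) /\
  g 1%:M = 1%:M /\
  (forall a A, g (inC N f a *: A) = a *: g A) /\
  (forall A : 'M[k]_N, g (map_mx (inC N f) A) = A) /\
  (forall r, g (piR X f N r) = sigma r).

Lemma rho_tilde_spec (k : fieldType) (s : nat) (R : algType k) (X : 'I_s -> R)
    (f : nat -> FA k s) (N : nat) (sigma : R -> 'M[k]_N) :
  (forall r : R, exists p : FA k s, alg_eval X p = r) ->
  (forall n, alg_eval X (f n) = 0) -> representation sigma ->
  tilde_spec X sigma (@rho_tilde k s R X f N sigma).
Proof.
move=> hsurj hf0 hsig; apply: (epsilon_spec (inhabits (fun _ => 0))).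
exists (map_mx (quot_eval hsig hf0)); do ![split].
- exact: map_mxD.
- exact: map_mxM.
- by rewrite map_scalar_mx rmorph1.
- by move=> a A; apply/matrixP => i j; rewrite !mxE rmorphM /= quot_eval_inC.
- by move=> A; apply/matrixP => i j; rewrite !mxE /= quot_eval_inC.
- move=> r; rewrite /piR /pibar; set p := epsilon _ _.
  have <- : alg_eval X p = r.
    exact: (epsilon_spec (inhabits 0) (fun p => alg_eval X p = r)).
  rewrite -(map_chat_eval_pihat X hsig); apply/matrixP => i j.
  by rewrite !mxE /= quot_evalE.
Qed.

Section ScalarRestriction.
Variables (k : fieldType) (s N : nat) (f : nat -> FA k s) (N_gt0 : (0 < N)%N).
Variable g : 'M[C N f]_N -> 'M[k]_N.
Hypotheses (gD : forall A B, g (A + B) = g A + g B)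
  (gM : forall A B, g (A *m B) = g A *m g B) (g1 : g 1%:M = 1%:M)
  (gI : forall A : 'M[k]_N, g (map_mx (inC N f) A) = A).

Let i0 := Ordinal N_gt0.

Definition scalar_restriction of (forall A B, g (A + B) = g A + g B)
    & (forall A B, g (A *m B) = g A *m g B) & g 1%:M = 1%:M
    & (forall A : 'M[k]_N, g (map_mx (inC N f) A) = A) : C N f -> k :=
  fun c => g c%:M i0 i0.
Local Notation psi := (scalar_restriction gD gM g1 gI).

Let g0 : g 0 = 0.
Proof. by apply: (addrI (g 0)); rewrite -gD !addr0. Qed.

Let g_delta (a b : 'I_N) : g (delta_mx a b) = delta_mx a b.
Proof.
by rewrite -[RHS]gI; congr g; apply/matrixP => p q; rewrite !mxE rmorph_nat.
Qed.

(* [c%:M] is the sum of the [delta_mx i i0 *m c%:M *m delta_mx i0 i], and [g]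
   fixes the matrix units. *)
Lemma g_scalar c : g c%:M = (psi c)%:M.
Proof.
have -> : c%:M = \sum_i delta_mx i i0 *m c%:M *m delta_mx i0 i :> 'M[C N f]_N.
  rewrite [LHS]scalar_mx_sum_delta; apply: eq_bigr => i _.
  by rewrite mul_delta_mx_mid mxE eqxx mulr1n.
rewrite (big_morph g gD g0) [RHS]scalar_mx_sum_delta; apply: eq_bigr => i _.
by rewrite !gM !g_delta mul_delta_mx_mid.
Qed.

Lemma g_mapE A : g A = map_mx psi A.
Proof.
rewrite {1}[A]matrix_sum_delta (big_morph g gD g0) [RHS]matrix_sum_delta.
apply: eq_bigr => a _; rewrite (big_morph g gD g0); apply: eq_bigr => b _.
by rewrite -mul_scalar_mx gM g_scalar g_delta mul_scalar_mx mxE.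
Qed.

Lemma scalar_restriction_is_zmod_morphism : zmod_morphism psi.
Proof.
have gN A : g (- A) = - g A by apply: (addrI (g A)); rewrite -gD !subrr.
by move=> c d; rewrite /scalar_restriction raddfB gD gN !mxE.
Qed.

Lemma scalar_restriction_is_monoid_morphism : monoid_morphism psi.
Proof.
split => [|c d]; first by rewrite /scalar_restriction g1 mxE eqxx.
by rewrite {1}/scalar_restriction scalar_mxM gM !g_scalar -scalar_mxM mxE eqxx mulr1n.
Qed.

HB.instance Definition _ := GRing.isZmodMorphism.Build (C N f) k psi
  scalar_restriction_is_zmod_morphism.
HB.instance Definition _ := GRing.isMonoidMorphism.Build (C N f) k psi
  scalar_restriction_is_monoid_morphism.

Lemma scalar_restriction_inC a : psi (inC N f a) = a.
Proof.
rewrite /scalar_restriction.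
have -> : (inC N f a)%:M = map_mx (inC N f) (a%:M : 'M[k]_N).
  by apply/matrixP => p q; rewrite !mxE rmorphMn.
by rewrite gI mxE eqxx.
Qed.
End ScalarRestriction.

Section PsiCharacter.
Variables (k : closedFieldType) (s : nat) (R : algType k) (X : 'I_s -> R).
Variables (f : nat -> FA k s) (d N : nat).
Hypotheses (hsurj : forall r : R, exists p : FA k s, alg_eval X p = r)
  (hf0 : forall n, alg_eval X (f n) = 0)
  (hdim : forall V : lmodType R, simple_module V -> kdim_le V d)
  (N_gt0 : (0 < N)%N) (hNd : forall m : nat, (0 < m)%N -> (m <= d)%N -> (m %| N)%N).

Local Notation Tsub := (@Tsub k s R X f N).
Local Notation Psi := (@Psi k s R X f N).
Local Notation inC := (inC N f).

Lemma Tsub_inC a : Tsub (inC a).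
Proof. by move=> S. Qed.

Lemma TsubD x y : Tsub x -> Tsub y -> Tsub (x + y).
Proof. move=> Tx Ty S SC SD SM Sp; exact: SD (Tx S SC SD SM Sp) (Ty S SC SD SM Sp). Qed.

Lemma TsubM x y : Tsub x -> Tsub y -> Tsub (x * y).
Proof. move=> Tx Ty S SC SD SM Sp; exact: SM (Tx S SC SD SM Sp) (Ty S SC SD SM Sp). Qed.

Lemma Tsub_char_poly r i : Tsub (char_poly (piR X f N r))`_i.
Proof. by move=> S _ _ _; apply. Qed.

Lemma chosen_irrepP (P : R -> Prop) : primitive_ideal P ->
  irreducible_rep (projT2 (chosen_irrep P)) /\
  forall r, P r <-> projT2 (chosen_irrep P) r = 0.
Proof.
case=> V [simpleV PV].
have [m [rho [irr rho_ann]]] := simple_module_rep simpleV (hdim simpleV).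
apply: (epsilon_spec (inhabits (existT (fun m => R -> 'M[k]_m) 0%N (fun _ => 0)))
  (fun mr => irreducible_rep (projT2 mr) /\ forall r, P r <-> projT2 mr r = 0)).
by exists (existT _ m rho); split => // r; rewrite PV rho_ann.
Qed.

Lemma irrep_dvdN m (rho : R -> 'M[k]_m) : irreducible_rep rho -> (m %| N)%N.
Proof.
move=> irr; have hrep : representation rho by case: irr.
apply: hNd; first by case: irr.
exact/(rep_colmod_dim (hrep := hrep))/hdim/rep_colmod_simple.
Qed.

Lemma Psi_character (P : R -> Prop) :
  primitive_ideal P -> exists psi : {rmorphism C N f -> k},
  [/\ forall c, Psi P c <-> Tsub c /\ psi c = 0, forall a, psi (inC a) = a
    & forall r, map_mx psi (piR X f N r) = blockdiag_rep N (projT2 (chosen_irrep P)) r].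
Proof.
case/chosen_irrepP => irr _; set rho := projT2 _ in irr *.
have hsig : representation (blockdiag_rep N rho).
  by have [hrep m_gt0 _] := irr; exact: blockdiag_rep_rep m_gt0 (irrep_dvdN irr) hrep.
have [gD [gM [g1 [_ [gI gpi]]]]] := rho_tilde_spec hsurj hf0 hsig.
exists (scalar_restriction N_gt0 gD gM g1 gI : {rmorphism C N f -> k}); split => [c|a|r].
- rewrite /Psi (g_scalar N_gt0 gD gM g1 gI); split=> -[Tc c0]; split => //.
    by move/matrixP: c0 => /(_ (Ordinal N_gt0) (Ordinal N_gt0)); rewrite !mxE eqxx.
  by move: c0 => /= ->; rewrite raddf0.
- exact: scalar_restriction_inC.
- by rewrite -(g_mapE N_gt0 gD gM g1 gI) gpi.
Qed.

Lemma maximal_T_character (psi : {rmorphism C N f -> k}) (M : C N f -> Prop) :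
  (forall a, psi (inC a) = a) -> (forall c, M c <-> Tsub c /\ psi c = 0) ->
  @maximal_T k s R X f N M.
Proof.
move=> psi_inC ME; split.
- split.
  + by move=> c /ME [].
  + by apply/ME; rewrite rmorph0 -(rmorph0 inC); split; first exact: Tsub_inC.
  + move=> x y /ME [Tx x0] /ME [Ty y0]; apply/ME; split; first exact: TsubD.
    by rewrite rmorphD x0 y0 addr0.
  + move=> t c Tt /ME [Tc c0]; apply/ME; split; first exact: TsubM.
    by rewrite rmorphM c0 mulr0.
- by case/ME => _ /eqP; rewrite rmorph1 oner_eq0.
move=> M' [M'T _ M'D M'M] MM' M'1 c M'c; apply/ME; split; first exact: M'T.
set a := psi c; have Tc := M'T c M'c.
have Mca : M (c - inC a).
  apply/ME; split; last by rewrite rmorphB psi_inC subrr.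
  by rewrite -mulN1r -(rmorphN1 inC); apply: TsubD Tc (TsubM (Tsub_inC _) (Tsub_inC _)).
have M'a : M' (inC a).
  have -> : inC a = c + inC (-1) * (c - inC a).
    by rewrite rmorphN1 mulN1r opprB addrCA subrr addr0.
  exact: M'D M'c (M'M _ _ (Tsub_inC _) (MM' _ Mca)).
have [// | nza] := eqVneq a 0; case: M'1.
by rewrite -(rmorph1 inC) -(mulVf nza) rmorphM; apply: M'M M'a; exact: Tsub_inC.
Qed.

Lemma Psi_maximal (P : R -> Prop) : primitive_ideal P -> maximal_T X (Psi P).
Proof.
by case/Psi_character => psi [PsiE psi_inC _]; exact: maximal_T_character psi_inC PsiE.
Qed.

Variable I : R -> Prop.

Lemma Jof_det x : I x -> Jof X I (\det (piR X f N x)).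
Proof.
move=> Ix; set A := piR X f N x; split.
  have -> : \det A = inC ((-1) ^+ N) * (char_poly A)`_0.
    by rewrite char_poly_det rmorphXn rmorphN1 mulrA -exprMn mulrNN mulr1 expr1n mul1r.
  exact: TsubM (Tsub_inC _) (Tsub_char_poly _ _).
exists 1%N, (fun _ => 1%:M), (fun _ => x), (fun _ => \adj A); split => //.
by rewrite big_ord1 mul1mx mul_mx_adj.
Qed.

Hypothesis hI : two_sided_ideal I.

Lemma Jof_sub_Psi (P : R -> Prop) : primitive_ideal P ->
  (forall c, Jof X I c -> Psi P c) <-> (forall r, I r -> P r).
Proof.
move=> hP; have [psi [PsiE psi_inC psi_pi]] := Psi_character hP.
have [irr rhoP] := chosen_irrepP hP; set rho := projT2 _ in irr rhoP psi_pi.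
have m_gt0 : (0 < projT1 (chosen_irrep P))%N by case: irr.
split => [JP y Iy | IP c [Tc [n [a [x [b [Ix cE]]]]]]].
- apply: NNPP => nPy; have nzy : rho y != 0 by apply/eqP => /rhoP.
  have [x Ix x1] := irrep_ideal_one irr hI (ex_intro2 _ _ y Iy nzy).
  have /JP /PsiE [_] := Jof_det Ix.
  rewrite -det_map_mx psi_pi (blockdiag_repE N m_gt0) x1 blockdiag_mx1 det1.
  by move/eqP; rewrite oner_eq0.
- apply/PsiE; split => //; have := congr1 (map_mx psi) cE.
  rewrite map_scalar_mx map_mx_sum big1 => [|i _]; last first.
    rewrite !map_mxM psi_pi (blockdiag_repE N m_gt0) (proj1 (rhoP _) (IP _ (Ix i))).
    by rewrite blockdiag_mx0 mulmx0 mul0mx.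
  by move/matrixP => /(_ (Ordinal N_gt0) (Ordinal N_gt0)); rewrite !mxE eqxx.
Qed.

End PsiCharacter.

Theorem proposition4p2
  (k : closedFieldType) (s : nat) (R : algType k) (X : 'I_s -> R)
  (f : nat -> FA k s)
  (* R = k{X_1..X_s} / <f_1, f_2, ...>, X_l the image of \hat X_l *)
  (hsurj : forall r : R, exists p : FA k s, alg_eval X p = r)
  (hker : forall p : FA k s, alg_eval X p = 0 <->
     exists n (a b : 'I_n -> FA k s) (j : 'I_n -> nat),
       p = \sum_(i < n) a i * f (j i) * b i)
  (hPI : is_PI R)
  (d : nat) (hd : (0 < d)%N)
  (hdim : forall V : lmodType R, simple_module V -> kdim_le V d)
  (N : nat) (hN : (0 < N)%N)
  (hNd : forall m : nat, (0 < m)%N -> (m <= d)%N -> (m %| N)%N)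
  (I : R -> Prop) (hI : two_sided_ideal I) :
  (forall m : C N f -> Prop,
     (exists P, V_R I P /\ @Psi k s R X f N P = m) <->
     (@image_Psi k s R X f N m /\ @V_T k s R X f N (@Jof k s R X f N I) m)) /\
  (forall m : C N f -> Prop,
     (exists P, W_R I P /\ @Psi k s R X f N P = m) <->
     (@image_Psi k s R X f N m /\ @W_T k s R X f N (@Jof k s R X f N I) m)).
Proof.
have hf0 n : alg_eval X (f n) = 0.
  apply/hker; exists 1%N, (fun _ => 1), (fun _ => 1), (fun _ => n).
  by rewrite big_ord1 mul1r mulr1.
have JP (P : R -> Prop) := Jof_sub_Psi hsurj hf0 hdim hN hNd hI (P := P).
have maxPsi (P : R -> Prop) := Psi_maximal hsurj hf0 hdim hN hNd (P := P).
split=> M; split.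
- case=> P [[hP IP] <-]; split; first by exists P.
  by split; [exact: maxPsi | exact/JP].
- by case=> -[P [hP <-]] [_ JsubP]; exists P; split => //; split => //; exact/JP.
- case=> P [[hP nIP] <-]; split; first by exists P.
  by split; [exact: maxPsi | move/(JP P hP)].
- case=> -[P [hP <-]] [_ nJsubP]; exists P; split => //; split => // IP.
  by apply: nJsubP; apply/JP.
Qed.
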